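(* For $n\in\mathbb{N}$, $q>0$ and $M_n\in\{0,1,\dots,n-1\}$, $$\mathcal{P}_n^q(\mathcal{S}(n,M_n))=\begin{cases} q\,\dfrac{M_n}{n}\Big(\dfrac{n!}{M_n!}\,\dfrac{1}{\prod_{l=M_n}^{n-1}(l+q)}\Big)\displaystyle\sum_{j=M_n}^{n-1}\frac1j, & M_n\in\{1,\dots,n-1\};\\[2ex] \dfrac{(n-1)!}{\prod_{l=1}^{n-1}(l+q)}, & M_n=0.\end{cases}$$
   Context: For $n\in\mathbb{N}$ and $q>0$, $P_n^{\mathrm{LR}^-;q}$ is the probability measure on $S_n$ given by $P_n^{\mathrm{LR}^-;q}(\sigma)=q^{\mathrm{LR}^-_n(\sigma)}/(q(q+1)\cdots(q+n-1))$, where $\mathrm{LR}^-_n(\sigma)=|\{j\in[n]:\sigma_j=\min\{\sigma_i:1\le i\le j\}\}|$ is the number of left-to-right minima of $\sigma$. Secretary problem setting: $n$ items with ranks $1,\dots,n$ (rank $1$ is the highest) arrive one at a time; $\sigma=\sigma_1\cdots\sigma_n\in S_n$ means the $j$th arriving item has rank $\sigma_j$, and $\sigma$ is random with law $P_n^{\mathrm{LR}^-;q}$. The observer only sees relative ranks of items arrived so far and must select or irrevocably reject each item; the last item must be accepted if reached. For $M_n\in\{0,\dots,n-1\}$, the strategy $\mathcal{S}(n,M_n)$ rejects the first $M_n$ items and then selects the first later item ranked higher than all of the first $M_n$ items (if no such item exists, the last item is taken); $\mathcal{S}(n,0)$ selects the first item. $\mathcal{P}_n^{q}(\mathcal{S}(n,M_n))$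 is the probability under $P_n^{\mathrm{LR}^-;q}$ that $\mathcal{S}(n,M_n)$ selects the item of rank $1$. *)

From HB Require Import structures.
From mathcomp Require Import all_boot all_order all_fingroup all_algebra.
Set Implicit Arguments. Unset Strict Implicit. Unset Printing Implicit Defensive.
Import Order.TTheory GRing.Theory Num.Theory.

(* Conventions: positions 1..n are encoded as j : 'I_n (position j+1),
   ranks 1..n as values of s : 'S_n (rank r encoded as r-1); so the item of
   rank 1 is the one with value 0. *)

Definition LRmin n (s : 'S_n) : nat :=
  #|[set j : 'I_n | [forall i : 'I_n, (i <= j)%N ==> (s j <= s i)%N]]|.

Definition PLR (R : realFieldType) n (q : R) (s : 'S_n) : R :=
  q ^+ LRmin s / \prod_(i < n) (q + i%:R).

Definition beats_first n (M : nat) (s : 'S_n) (j : 'I_n) : bool :=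
  [forall i : 'I_n, (i < M)%N ==> (s j < s i)%N].

Definition sel_pos n (M : nat) (s : 'S_n) : nat :=
  if M == 0%N then 0%N
  else head n.-1
         [seq val j | j <- [seq j : 'I_n <- enum 'I_n | (M <= j)%N && beats_first M s j]].

Definition success n (M : nat) (s : 'S_n) : bool :=
  [exists j : 'I_n, (val j == sel_pos M s) && (val (s j) == 0%N)].

Definition succ_prob (R : realFieldType) n (q : R) (M : nat) : R :=
  \sum_(s : 'S_n | success M s) PLR q s.

(* Under the uniform measure on permutations, the events "position j is a
   left-to-right minimum" are independent: a permutation of n+1 items is the
   relative order t of the first n items together with the rank v of the last
   one, its minima among the first n positions are those of t, and the last
   item is a minimum iff v is the best rank.  Hence for arbitrary weights
   sum_s prod_j (if j is a minimum of s then a_j else b_j) = prod_j (a_j + j b_j).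
   The strategy S(n,M) picks the first left-to-right minimum at or after
   position M (for M = 0 the first item, always a minimum), whereas the best
   item is the last left-to-right minimum; so it succeeds iff exactly one
   minimum lies in [M, n).  Splitting this event according to the position m
   of that minimum and applying the product formula gives
   P = sum_(M <= m < n) prod_(j < M) (q + j) * q * prod_(M <= j < n, j <> m) j
       / prod_(j < n) (q + j),
   which simplifies to the stated closed form. *)

From HB Require Import structures.
From mathcomp Require Import all_boot all_order all_fingroup all_algebra.
From mathcomp Require Import ring.
Import Order.TTheory GRing.Theory Num.Theory.
Set Implicit Arguments. Unset Strict Implicit. Unset Printing Implicit Defensive.
Local Open Scope ring_scope.

Definition lrmin n (s : 'S_n) (j : 'I_n) : bool :=
  [forall i : 'I_n, (i <= j)%N ==> (s j <= s i)%N].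

Lemma lrmin_lift_perm n (v : 'I_n.+1) (t : 'S_n) (j : 'I_n) :
  lrmin (lift_perm ord_max v t) (lift ord_max j) = lrmin t j.
Proof.
apply/forallP/forallP => lrj i.
  by have := lrj (lift ord_max i); rewrite !lift_perm_lift !lift_max /= leq_bump2.
case: (unliftP ord_max i) => [i'|] ->.
  by have := lrj i'; rewrite !lift_perm_lift !lift_max /= leq_bump2.
by rewrite lift_max /= leqNgt ltn_ord.
Qed.

Lemma lrmin_max n (s : 'S_n.+1) : lrmin s ord_max = (s ord_max == ord0).
Proof.
apply/forallP/eqP => [lrmax | -> i]; last by rewrite leq0n implybT.
apply: val_inj; apply/eqP; rewrite /= -leqn0.
by have := lrmax (s^-1 ord0)%g; rewrite permKV -ltnS ltn_ord.
Qed.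

Lemma lift_perm_max_bij n :
  bijective (fun p : 'S_n * 'I_n.+1 => lift_perm ord_max p.2 p.1).
Proof.
apply: inj_card_bij; last by rewrite card_prod !card_Sn card_ord factS mulnC.
move=> [t v] [t' v'] /= eq_lift.
have eq_v : v = v' by rewrite -(lift_perm_id ord_max v t) eq_lift lift_perm_id.
congr (_, _) => //; apply/permP => k; apply: (@lift_inj _ v).
by rewrite -!(lift_perm_lift ord_max) eq_lift eq_v.
Qed.

Lemma sum_prod_lrmin (R : pzSemiRingType) n (a b : nat -> R) :
  \sum_(s : 'S_n) \prod_(j < n) (if lrmin s j then a j else b j)
  = \prod_(j < n) (a j + j%:R * b j).
Proof.
elim: n => [|n IHn].
  by rewrite big_ord0 (eq_bigr (fun=> 1)) => [|s _]; rewrite ?big_ord0 // sumr_const card_Sn.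
have sum_last : \sum_(v < n.+1) (if v == ord0 then a n else b n) = a n + n%:R * b n.
  by rewrite big_ord_recl eqxx (eq_bigr (fun=> b n)) // sumr_const card_ord mulr_natl.
rewrite big_ord_recr /= -IHn mulr_suml -sum_last.
under [RHS]eq_bigr do rewrite mulr_sumr.
rewrite pair_big (reindex _ (onW_bij _ (lift_perm_max_bij n))) /=.
apply: eq_bigr => -[t v] _ /=.
rewrite big_ord_recr /= lrmin_max lift_perm_id; congr (_ * _).
apply: eq_bigr => j _.
have -> : widen_ord (leqnSn n) j = lift ord_max j by exact/val_inj/esym/lift_max.
by rewrite lrmin_lift_perm.
Qed.

Variant first_spec n (P : pred 'I_n) (d : nat) : nat -> Type :=
  | FirstNone of (forall j, ~~ P j) : first_spec P d d
  | FirstSome (p : 'I_n) of P p & (forall j, P j -> p <= j)%N : first_spec P d p.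

Lemma firstP n (P : pred 'I_n) d :
  first_spec P d (head d [seq val j | j <- filter P (enum 'I_n)]).
Proof.
have ltn_val_trans : transitive (relpre (@nat_of_ord n) ltn) by move=> ? ? ?; exact: ltn_trans.
have sorted_enum : sorted (relpre (@nat_of_ord n) ltn) (enum 'I_n).
  by rewrite -sorted_map val_enum_ord iota_ltn_sorted.
have memP j : (j \in filter P (enum 'I_n)) = P j by rewrite mem_filter mem_enum andbT.
move: (sorted_filter ltn_val_trans P sorted_enum) memP.
case: (filter P (enum 'I_n)) => [|p l] /= sorted_pl memP.
  by constructor => j; rewrite -memP.
constructor => [|j]; first by rewrite -memP mem_head.
rewrite -memP inE => /predU1P [-> // | lj].
exact/ltnW/(allP (order_path_min ltn_val_trans sorted_pl)).
Qed.

Lemma cards_eq1_span n (A : {set 'I_n}) (a b : 'I_n) :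
  a \in A -> b \in A -> (forall j, j \in A -> a <= j <= b)%N ->
  (#|A| == 1%N) = (val a == val b).
Proof.
move=> Aa Ab A_span; apply/cards1P/idP => [[x defA] | eq_ab].
  by move: Aa Ab; rewrite defA !inE => /eqP-> /eqP->.
exists a; apply/setP => j; rewrite inE; apply/idP/eqP => [Aj | ->//].
have /andP [le_aj le_jb] := A_span j Aj.
by apply/val_inj/eqP; rewrite eqn_leq le_aj (eqP eq_ab) le_jb.
Qed.

Lemma lrmin_ord0 n (s : 'S_n.+1) : lrmin s ord0.
Proof.
apply/forallP => i; apply/implyP; rewrite leqn0 => /eqP i0.
by have -> : i = ord0 by exact: val_inj.
Qed.

Lemma lrmin_rank1 n (s : 'S_n.+1) : lrmin s (s^-1 ord0)%g.
Proof. by apply/forallP => i; rewrite permKV leq0n implybT. Qed.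

Lemma lrmin_le_rank1 n (s : 'S_n.+1) j : lrmin s j -> (j <= (s^-1 ord0)%g)%N.
Proof.
move=> /forallP lrj; rewrite leqNgt; apply/negP => lt_zj.
have /implyP/(_ (ltnW lt_zj)) := lrj (s^-1 ord0)%g.
rewrite permKV leqn0 => /eqP sj0.
have {}sj0 : s j = ord0 by exact: val_inj.
have eq_jz : j = (s^-1 ord0)%g by rewrite -sj0 permK.
by rewrite eq_jz ltnn in lt_zj.
Qed.

Lemma lrmin_beats_first n M (s : 'S_n) j :
  lrmin s j -> (M <= j)%N -> beats_first M s j.
Proof.
move=> /forallP lrj le_Mj; apply/forallP => i; apply/implyP => lt_iM.
have /implyP/(_ (ltnW (leq_trans lt_iM le_Mj))) := lrj i.
rewrite leq_eqVlt => /orP [/eqP/val_inj/perm_inj eq_ji | //].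
by rewrite -eq_ji ltnNge le_Mj in lt_iM.
Qed.

Lemma first_beats_lrmin n M (s : 'S_n) p : beats_first M s p ->
  (forall j : 'I_n, (M <= j)%N -> beats_first M s j -> (p <= j)%N) -> lrmin s p.
Proof.
move=> /forallP beats_p first_p; apply/forallP => i; apply/implyP => le_ip.
case: (ltnP i M) => [lt_iM | le_Mi].
  by have /implyP/(_ lt_iM)/ltnW := beats_p i.
case: (i =P p) => [-> // | ne_ip].
have /forallPn [k] : ~~ beats_first M s i.
  apply/negP => beats_i; apply: ne_ip; apply/val_inj/eqP.
  by rewrite eqn_leq le_ip (first_p i le_Mi beats_i).
rewrite negb_imply -leqNgt => /andP [lt_kM le_sk_si].
have /implyP/(_ lt_kM) lt_sp_sk := beats_p k.
exact/ltnW/(leq_trans lt_sp_sk).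
Qed.

Lemma success_lrmin n M (s : 'S_n.+1) : (M <= n)%N ->
  success M s = (#|[set j | lrmin s j & M <= j]| == 1)%N.
Proof.
move=> le_Mn; set z := (s^-1 ord0)%g; set L := [set j | _ & _]%N.
have successE : success M s = (sel_pos M s == z).
  apply/existsP/eqP => [[j /andP [/eqP <- /eqP sj0]] | sel_z].
    have {}sj0 : s j = ord0 by exact: val_inj.
    by rewrite /z -sj0 permK.
  by exists z; rewrite sel_z eqxx /z permKV.
have L_le_z j : j \in L -> (j <= z)%N by rewrite inE => /andP [/lrmin_le_rank1].
rewrite successE /sel_pos; apply/esym; case: ifPn => [/eqP M0 | M_gt0].
  apply: (@cards_eq1_span _ L ord0); rewrite ?inE ?lrmin_ord0 ?lrmin_rank1 ?M0 //.
case: firstP => [no_beat | p /andP [le_Mp beats_p] first_p].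
  have lt_zM : (z < M)%N.
    rewrite ltnNge; apply/negP => le_Mz.
    by have := no_beat z; rewrite le_Mz (lrmin_beats_first (lrmin_rank1 s) le_Mz).
  have -> : L = set0.
    apply/setP => j; rewrite !inE; apply/andP => -[/lrmin_le_rank1 le_jz le_Mj].
    by move: (leq_trans le_Mj le_jz); rewrite leqNgt lt_zM.
  by rewrite cards0 (gtn_eqF (leq_trans lt_zM le_Mn)).
have first_p' (j : 'I_n.+1) : (M <= j)%N -> beats_first M s j -> (p <= j)%N.
  by move=> le_Mj beats_j; apply: first_p; rewrite le_Mj.
apply: cards_eq1_span.
- by rewrite inE le_Mp (first_beats_lrmin beats_p first_p').
- rewrite inE lrmin_rank1 leqNgt; apply/negP => lt_zM.
  by have /implyP/(_ lt_zM) := forallP beats_p z; rewrite permKV.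
- move=> j Lj; rewrite L_le_z // andbT.
  by move: Lj; rewrite inE => /andP [lrj le_Mj]; rewrite first_p' ?lrmin_beats_first.
Qed.

Lemma prod_weight_set1 (T : finType) (R : comPzSemiRingType) (A : {set T})
    (I : pred T) (m : T) (q : R) : I m ->
  \prod_j (if j \in A then (if I j && (j != m) then 0 else q) else (j != m)%:R)
  = if [set j in A | I j] == [set m] then q ^+ #|A| else 0.
Proof.
move=> Im; case: ifP => [/eqP AI_m | /negbT AI_ne].
  have memAI j : (j \in A) && I j = (j == m) by rewrite -in_set1 -AI_m inE.
  rewrite -prodr_const [RHS]big_mkcond /=; apply: eq_bigr => j _.
  case jA: (j \in A); have := memAI j; rewrite jA /=.
    by move->; rewrite andbN.
  by move/esym/negbT->.
have [mA | mNA] := boolP (m \in A); last by rewrite (bigD1 m) //= (negbTE mNA) eqxx mul0r.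
have /existsP [j /andP [/andP [jA Ij] ne_jm]] : [exists j, (j \in A) && I j && (j != m)].
  apply: contraR AI_ne => /existsPn none; apply/eqP/setP => j; rewrite !inE.
  case: (j =P m) => [-> | /eqP ne_jm]; first by rewrite mA Im.
  by have := none j; rewrite ne_jm andbT => /negbTE.
by rewrite (bigD1 j) //= jA Ij ne_jm mul0r.
Qed.

Lemma sum_if_eq_set1 (T : finType) (R : nmodType) (B : {set T}) (P : pred T) (c : R) :
  {subset B <= P} ->
  \sum_(m | P m) (if B == [set m] then c else 0) = if #|B| == 1%N then c else 0.
Proof.
move=> sub_BP; case: ifP => [/cards1P [x defB] | /negbT card_ne1].
  have Px : P x by apply: sub_BP; rewrite defB set11.
  rewrite (bigD1 x) //= defB eqxx big1 ?addr0 // => m /andP [_ ne_mx].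
  by rewrite (inj_eq set1_inj) eq_sym (negbTE ne_mx).
rewrite big1 // => m _; case: eqP => // defB.
by rewrite defB cards1 eqxx in card_ne1.
Qed.

Lemma succ_prob_prod (R : realFieldType) n (q : R) M : (M <= n)%N ->
  succ_prob n.+1 q M =
  (\sum_(M <= m < n.+1) \prod_(0 <= j < n.+1)
      ((if (M <= j)%N && (j != m) then 0 else q) + j%:R * (j != m)%:R))
  / \prod_(0 <= i < n.+1) (q + i%:R).
Proof.
move=> le_Mn; rewrite /succ_prob /PLR -big_distrl /= big_mkcond /=.
congr (_ / _); last by rewrite big_mkord.
rewrite big_geq_mkord /=.
(* The [m]-th summand below is [q ^+ LRmin s] if [m] is the only
   left-to-right minimum of [s] at or after [M], and [0] otherwise. *)
pose a (m j : nat) := if (M <= j)%N && (j != m) then 0 else q.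
pose b (m j : nat) : R := (j != m)%:R.
have sum_weights s : (if success M s then q ^+ LRmin s else 0)
    = \sum_(m < n.+1 | (M <= m)%N) \prod_(j < n.+1) (if lrmin s j then a m j else b m j).
  rewrite success_lrmin // -(sum_if_eq_set1 _ (P := fun m : 'I_n.+1 => M <= m)%N).
    2: by move=> j; rewrite inE => /andP [].
  apply: eq_bigr => m le_Mm.
  have -> : [set j | lrmin s j & M <= j]%N = [set j in [set j | lrmin s j] | M <= j]%N.
    by apply/setP => j; rewrite !inE.
  rewrite -(@prod_weight_set1 _ _ _ (fun j : 'I_n.+1 => M <= j)%N) //.
  by apply: eq_bigr => j _; rewrite inE.
rewrite (eq_bigr _ (fun s _ => sum_weights s)) exchange_big /=.
by apply: eq_bigr => m _; rewrite sum_prod_lrmin big_mkord.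
Qed.

Lemma prod_weight_split (R : comPzSemiRingType) (q : R) M m n : (M <= m < n)%N ->
  \prod_(0 <= j < n) ((if (M <= j)%N && (j != m) then 0 else q) + j%:R * (j != m)%:R)
  = \prod_(0 <= j < M) (q + j%:R) * (q * \prod_(M <= j < n | j != m) j%:R).
Proof.
move=> /andP [le_Mm lt_mn].
rewrite (@big_cat_nat _ _ _ M 0 n _ _ (leq0n M) (leq_trans le_Mm (ltnW lt_mn))) /=.
congr (_ * _).
  apply: eq_big_nat => j /andP [_ lt_jM].
  have ne_jm : j != m by rewrite neq_ltn (leq_trans lt_jM le_Mm).
  by rewrite leqNgt lt_jM ne_jm mulr1.
rewrite (bigD1_seq m) ?mem_index_iota ?le_Mm ?iota_uniq //= eqxx /= mulr0 addr0.
congr (_ * _); rewrite big_nat_cond [RHS]big_nat_cond.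
by apply: eq_bigr => j /andP [/andP [le_Mj _] ne_jm]; rewrite le_Mj ne_jm add0r mulr1.
Qed.

Lemma prod_natr_range (R : numFieldType) M n : (0 < M <= n)%N ->
  \prod_(M <= j < n) (j%:R : R) = M%:R * n`!%:R / (n%:R * M`!%:R).
Proof.
move=> /andP [M_gt0 le_Mn].
have nM_neq0 : n%:R * M`!%:R != 0 :> R.
  by rewrite mulf_neq0 ?pnatr_eq0 -?lt0n ?fact_gt0 ?(leq_trans M_gt0 le_Mn).
apply: (canRL (mulfK nM_neq0)); rewrite mulrA -natr_prod -!natrM; congr _%:R.
have fact_split : (M`! * \prod_(M.+1 <= j < n.+1) j = n`!)%N.
  by rewrite !fact_prod -big_cat_nat.
by rewrite -big_nat_recr //= big_ltn ?ltnS // -fact_split mulnAC mulnA.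
Qed.

Lemma sum_prod_skip0 (R : pzSemiRingType) n :
  \sum_(0 <= m < n.+1) \prod_(0 <= j < n.+1 | j != m) (j%:R : R) = n`!%:R.
Proof.
rewrite big_ltn // [X in _ + X]big_nat_cond [X in _ + X]big1 => [|m]; last first.
  by move=> /andP [/andP [m_gt0 _] _]; rewrite big_ltn_cond //= eq_sym -lt0n m_gt0 mul0r.
rewrite addr0 big_ltn_cond //= fact_prod natr_prod big_nat_cond [RHS]big_nat_cond.
by apply: eq_bigl => j; rewrite -lt0n andbT andbC andbA andbb.
Qed.

Lemma sum_prod_skip (R : numFieldType) M n : (0 < M)%N ->
  \sum_(M <= m < n) \prod_(M <= j < n | j != m) (j%:R : R)
  = \prod_(M <= j < n) j%:R * \sum_(M <= m < n) m%:R^-1.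
Proof.
move=> M_gt0; rewrite mulr_sumr; apply: eq_big_nat => m /andP [le_Mm lt_mn].
rewrite (bigD1_seq m) ?mem_index_iota ?le_Mm ?iota_uniq //= mulrAC mulfV ?mul1r //.
by rewrite pnatr_eq0 -lt0n (leq_trans M_gt0 le_Mm).
Qed.

Lemma prod_add_nat_neq0 (R : numDomainType) (q : R) a b :
  0 < q -> \prod_(a <= j < b) (q + j%:R) != 0.
Proof.
move=> q_gt0; rewrite prodf_seq_neq0; apply/allP => j _.
exact/lt0r_neq0/(ltr_wpDr (ler0n _ _) q_gt0).
Qed.

Unset Implicit Arguments.

Theorem theorem1p2 (R : realFieldType) (n M : nat) (q : R) :
  0 < q -> (M < n)%N ->
  succ_prob n q M =
  (if M == 0%N then
     (n.-1)`!%:R / \prod_(1 <= l < n) (l%:R + q)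
   else
     q * (M%:R / n%:R)
       * (n`!%:R / M`!%:R / \prod_(M <= l < n) (l%:R + q))
       * \sum_(M <= j < n) (j%:R)^-1).
Proof.
move=> q_gt0; case: n => [// | n]; rewrite ltnS => le_Mn.
rewrite succ_prob_prod // (eq_big_nat _ _ (fun m => @prod_weight_split R q M m n.+1)).
rewrite -big_distrr -big_distrr /= (@big_cat_nat _ _ _ M 0 n.+1) ?leqW //=.
rewrite invfM mulrACA mulfV ?mul1r ?prod_add_nat_neq0 //.
have q_neq0 : q != 0 by rewrite gt_eqF.
case: M le_Mn => [|M] le_Mn /=; under [in RHS]eq_bigr do rewrite addrC.
  rewrite sum_prod_skip0 big_ltn //= mulr0n addr0.
  have prod_neq0 := prod_add_nat_neq0 1 n.+1 q_gt0.
  by field; rewrite q_neq0 prod_neq0.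
rewrite sum_prod_skip // prod_natr_range; last exact: ltnW.
have prod_neq0 := prod_add_nat_neq0 M.+1 n.+1 q_gt0.
by field; rewrite prod_neq0 nat1r !pnatr_eq0 -lt0n fact_gt0.
Qed.
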